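(* Let $n$ be a positive integer and $m$ a positive even integer. Let $\mathcal{A}$ and $\mathcal{B}$ be $m$-th order $n$-dimensional real weakly symmetric tensors with $\mathcal{B}$ positive definite, and let $\lambda_{\min}$ be the smallest $\mathcal{B}_r$-eigenvalue of $\mathcal{A}$. Define $f_1:\mathbb{R}^n\to\mathbb{R}$ by $$f_1(x)=\frac{1}{2m}(\mathcal{B}x^m)^2+\frac{1}{m}\mathcal{A}x^m,$$ whose gradient is $\nabla f_1(x)=(\mathcal{B}x^m)\,\mathcal{B}x^{m-1}+\mathcal{A}x^{m-1}$. Then: (a) $f_1$ is coercive on $\mathbb{R}^n$, i.e. $f_1(x)\to+\infty$ as $\|x\|\to\infty$. (b) The critical points of $f_1$ are (i) $x=0$, and (ii) any $\mathcal{B}_r$-eigenvector $x$ of $\mathcal{A}$ associated with a $\mathcal{B}_r$-eigenvalue $\lambda<0$ of $\mathcal{A}$ satisfying $\mathcal{B}x^m=-\lambda$. (c) If $\lambda_{\min}<0$, then $f_1$ attains its global minimum value $\min f_1(x)=-\frac{1}{2m}\lambda_{\min}^2$ at any $\mathcal{B}_r$-eigenvector associated with $\lambda_{\min}$ satisfying $\mathcal{B}x^m=-\lambda_{\min}$. (d) If $\lambda_{\min}\ge0$, then $x=0$ is the unique critical point of $f_1$ and the unique global minimizer of $f_1$ on $\mathbb{R}^n$.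
   Context: An $m$-th order $n$-dimensional real tensor is an array $\mathcal{A}=(A_{i_1\cdots i_m})$ with indices in $\{1,\dots,n\}$ and real entries. For $x\in\mathbb{R}^n$, $\mathcal{A}x^m=\sum_{i_1,\dots,i_m=1}^n A_{i_1\cdots i_m}x_{i_1}\cdots x_{i_m}$, and $\mathcal{A}x^{m-1}\in\mathbb{R}^n$ has $i$-th entry $\sum_{i_2,\dots,i_m=1}^n A_{i i_2\cdots i_m}x_{i_2}\cdots x_{i_m}$. A tensor is weakly symmetric if $\nabla(\mathcal{A}x^m)=m\,\mathcal{A}x^{m-1}$ for all $x$, and positive definite if $\mathcal{A}x^m>0$ for all $x\ne0$. With $\mathcal{B}$ weakly symmetric positive definite, $\lambda\in\mathbb{R}$ is a $\mathcal{B}_r$-eigenvalue of $\mathcal{A}$, with $\mathcal{B}_r$-eigenvector $x\in\mathbb{R}^n\setminus\{0\}$, if $\mathcal{A}x^{m-1}=\lambda\,\mathcal{B}x^{m-1}$. The set of $\mathcal{B}_r$-eigenvalues is nonempty and has a smallest element $\lambda_{\min}$. *)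

From HB Require Import structures.
From mathcomp Require Import all_boot all_order all_algebra.
From mathcomp Require Import all_classical all_reals all_analysis.
Set Implicit Arguments. Unset Strict Implicit. Unset Printing Implicit Defensive.
Import Order.TTheory GRing.Theory Num.Theory.
Import numFieldNormedType.Exports.
Local Open Scope ring_scope.

(* An m-th order n-dimensional real tensor: entries A_(i_1 ... i_m),
   indexed by maps s : 'I_m -> 'I_n  (s k = i_(k+1)). *)
Definition tensor (R : realType) (m n : nat) := {ffun 'I_m -> 'I_n} -> R.

Definition Axm (R : realType) (m n : nat) (A : tensor R m n) (x : 'rV[R]_n) : R :=
  \sum_(s : {ffun 'I_m -> 'I_n}) A s * \prod_(k < m) x ord0 (s k).

(* (A x^(m-1))_i = sum_{i_2..i_m} A_{i i_2..i_m} x_{i_2} ... x_{i_m} *)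
Definition Axm1 (R : realType) (m n : nat) (A : tensor R m n) (x : 'rV[R]_n)
  : 'rV[R]_n :=
  \row_(i < n) \sum_(s : {ffun 'I_m -> 'I_n} |
                     [forall k : 'I_m, (nat_of_ord k == 0%N) ==> (s k == i)])
      A s * \prod_(k < m | nat_of_ord k != 0%N) x ord0 (s k).

Definition has_gradient (R : realType) (n : nat) (f : 'rV[R]_n -> R^o)
  (x g : 'rV[R]_n) : Prop :=
  forall i : 'I_n, is_derive x (delta_mx ord0 i) f (g ord0 i).

Definition critical_point (R : realType) (n : nat) (f : 'rV[R]_n -> R^o)
  (x : 'rV[R]_n) : Prop := has_gradient f x 0.

Definition weakly_symmetric (R : realType) (m n : nat) (A : tensor R m n) : Prop :=
  forall x : 'rV[R]_n, has_gradient (Axm A) x (m%:R *: Axm1 A x).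

Definition pos_def (R : realType) (m n : nat) (B : tensor R m n) : Prop :=
  forall x : 'rV[R]_n, x != 0 -> 0 < Axm B x.

Definition Br_eigenvector (R : realType) (m n : nat) (A B : tensor R m n)
  (lam : R) (x : 'rV[R]_n) : Prop :=
  x != 0 /\ Axm1 A x = lam *: Axm1 B x.

Definition Br_eigenvalue (R : realType) (m n : nat) (A B : tensor R m n)
  (lam : R) : Prop := exists x, Br_eigenvector A B lam x.

Definition f1 (R : realType) (m n : nat) (A B : tensor R m n) (x : 'rV[R]_n) : R^o :=
  (Axm B x) ^+ 2 / (2 * m)%:R + Axm A x / m%:R.

Definition coercive (R : realType) (n : nat) (f : 'rV[R]_n -> R) : Prop :=
  forall M : R, exists r : R, forall x : 'rV[R]_n, r < `|x| -> M < f x.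

(** Minimising the Rayleigh quotient [A x^m / B x^m] over the unit sphere and
    applying Fermat's rule to [A x^m - c B x^m] at the minimiser produces a
    B_r-eigenvalue [c] with [c B x^m <= A x^m] for all [x]; hence
    [lmin B x^m <= A x^m] everywhere.  Plugging this into [f1] gives
    [f1 x >= ((B x^m + lmin)^2 - lmin^2) / 2m], which yields (c) and (d).
    By Euler's identity [A x^m = x . A x^(m-1)], a critical point satisfies
    [A x^(m-1) = - (B x^m) B x^(m-1)], so it is [0] or a B_r-eigenvector for the
    negative eigenvalue [- B x^m]: this is (b).  For coercivity, homogeneity and
    the extreme values on the unit sphere give [B x^m >= b |x|^m] with [b > 0]
    and [A x^m >= a |x|^m], so [f1] grows at least like a quadratic in [|x|^m]. *)

From HB Require Import structures.
From mathcomp Require Import all_boot all_order all_algebra.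
From mathcomp Require Import all_classical all_reals all_analysis.
From mathcomp Require Import ring lra.
Set Implicit Arguments. Unset Strict Implicit. Unset Printing Implicit Defensive.
Import Order.TTheory GRing.Theory Num.Theory.
Import numFieldNormedType.Exports.
Local Open Scope classical_set_scope.
Local Open Scope ring_scope.

Lemma is_derive_min_eq0 {R : realType} {n} {F : 'rV[R]_n -> R^o} {u v : 'rV[R]_n} {d : R} :
  (forall x, F u <= F x) -> is_derive u v F d -> d = 0.
Proof.
move=> Fmin [dF <-].
apply/eqP; rewrite eq_le; apply/andP; split.
  rewrite ['D_v F u]cvg_at_leftE //; apply: limr_le.
    rewrite -(cvg_at_leftE (fun h : R => h^-1 *: ((F \o shift u) _ - F u))) //.
    apply: cvg_trans dF; apply: cvg_app.
    move=> A [e egt0 Ae]; exists e => // x xe xlt0; apply: Ae => //.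
    exact/ltr0_neq0.
  near=> h; apply: mulr_le0_ge0.
    by rewrite invr_le0; apply: ltW; near: h; exact: nbhs_left_lt.
  by rewrite subr_ge0; apply: Fmin.
rewrite ['D_v F u]cvg_at_rightE //; apply: limr_ge.
  rewrite -(cvg_at_rightE (fun h : R => h^-1 *: ((F \o shift u) _ - F u))) //.
  apply: cvg_trans dF; apply: cvg_app.
  move=> A [e egt0 Ae]; exists e => // x xe xgt0; apply: Ae => //.
  exact/lt0r_neq0.
near=> h; apply: mulr_ge0.
  by rewrite invr_ge0; apply: ltW; near: h; exact: nbhs_right_gt.
by rewrite subr_ge0; apply: Fmin.
Unshelve. all: by end_near.
Qed.

Lemma quadratic_unbounded (R : realFieldType) (c a M : R) : 0 < c ->
  exists K, forall s, K < s -> M < c * s ^+ 2 + a * s.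
Proof.
move=> c0; exists ((`|M| + `|a| + 1) / c + 1) => s hs.
have q0 : 0 <= (`|M| + `|a| + 1) / c by rewrite divr_ge0 // ltW.
have s1 : 1 < s by apply: le_lt_trans hs; rewrite lerDr.
have s0 : 0 < s by apply: lt_trans s1.
have h1 : `|M| + `|a| + 1 < s * c.
  by rewrite -ltr_pdivrMr //; apply: lt_trans _ hs; rewrite ltrDl.
have h2 : s * (`|M| + `|a| + 1) < s * (s * c) by rewrite ltr_pM2l.
rewrite !mulrDr mulr1 in h2.
have h3 : - (s * `|a|) <= s * a.
  by rewrite -mulrN; apply: ler_wpM2l; [exact: ltW|rewrite lerNl -normrN ler_norm].
have h4 : `|M| <= s * `|M| by rewrite ler_peMl // ltW.
have h5 : M <= `|M| by apply: ler_norm.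
rewrite expr2 (mulrC a); lra.
Qed.

Section UnitSphere.
Variables (R : realType) (n : nat).

Definition unit_sphere := [set x : 'rV[R]_n | `|x| = 1].

Lemma compact_unit_sphere : compact unit_sphere.
Proof.
apply: bounded_closed_compact.
  rewrite /= /bounded_near; near=> M => x /= ->; near: M.
  exact: nbhs_pinfty_ge.
apply: (@preimage_closed _ _ (fun x : 'rV[R]_n => `|x|) [set r : R | r = 1]).
  by move=> x _; apply: norm_continuous.
exact: closed_eq.
Unshelve. all: by end_near.
Qed.

Lemma unit_sphere_normalize (y : 'rV[R]_n) : y != 0 -> unit_sphere (`|y|^-1 *: y).
Proof.
move=> y0; rewrite /unit_sphere /= normrZ normrV ?unitfE ?normr_eq0 // normr_id.
by rewrite mulVf // normr_eq0.
Qed.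

Lemma unit_sphere_neq0 (x : 'rV[R]_n) : unit_sphere x -> x != 0.
Proof. by rewrite /unit_sphere /=; apply: contra_eqN => /eqP ->; rewrite normr0 eq_sym oner_eq0. Qed.

Lemma unit_sphere_neq0set : (0 < n)%N -> unit_sphere !=set0.
Proof.
move=> n0; have : (const_mx 1 : 'rV[R]_n) != 0.
  by apply/eqP => /matrixP /(_ ord0 (Ordinal n0)); rewrite !mxE; exact/eqP/oner_neq0.
by move=> /unit_sphere_normalize; eexists; eassumption.
Qed.

End UnitSphere.
Arguments unit_sphere {R n}.

Section TensorForms.
Variables (R : realType) (m n : nat).
Implicit Types (A B : tensor R m n) (x y : 'rV[R]_n).

Lemma Axm_continuous A : continuous (Axm A).
Proof.
have -> : Axm A = \sum_(s : {ffun 'I_m -> 'I_n})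
    (cst (A s) \* \prod_(k < m) (fun y : 'rV[R]_n => y ord0 (s k))).
  by apply/funext => y; rewrite /Axm fct_sumE; apply: eq_bigr => s _; rewrite /= fct_prodE.
move=> x; elim/big_ind: _ => [|f g cf cg|s _]; first exact: cst_continuous.
  exact: continuousD.
apply: continuousM; first exact: cst_continuous.
elim/big_ind: _ => [|f g cf cg|k _]; first exact: (@cst_continuous _ _ (1 : R) x).
  exact: continuousM.
exact: coord_continuous.
Qed.

Lemma AxmZ A t x : Axm A (t *: x) = t ^+ m * Axm A x.
Proof.
rewrite /Axm mulr_sumr; apply: eq_bigr => s _; rewrite mulrCA; congr (_ * _).
under eq_bigr do rewrite mxE.
by rewrite big_split /= prodr_const card_ord.
Qed.

Lemma Axm1Z A t x : Axm1 A (t *: x) = t ^+ m.-1 *: Axm1 A x.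
Proof.
apply/rowP => i; rewrite !mxE mulr_sumr; apply: eq_bigr => s _.
rewrite mulrCA; congr (_ * _).
under eq_bigr do rewrite mxE.
rewrite big_split /=; congr (_ * _).
case: m s => [|k] s; first by rewrite big_ord0.
rewrite big_mkcond big_ord_recl /= mul1r.
under eq_bigr do rewrite /bump /=.
by rewrite prodr_const card_ord.
Qed.

Hypothesis m_gt0 : (0 < m)%N.

Lemma Axm0 A : Axm A 0 = 0.
Proof. by rewrite -(scale0r (0 : 'rV[R]_n)) AxmZ expr0n (negbTE (lt0n_neq0 m_gt0)) mul0r. Qed.

Lemma Axm1_0 A : (1 < m)%N -> Axm1 A 0 = 0.
Proof.
move=> m1; apply/rowP => i; rewrite !mxE; apply: big1 => s _.
by rewrite (bigD1 (Ordinal m1)) //= mxE mul0r mulr0.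
Qed.

Lemma Axm_ge0 B : pos_def B -> forall x, 0 <= Axm B x.
Proof. by move=> pB x; case: (eqVneq x 0) => [->|/pB/ltW //]; rewrite Axm0. Qed.

Lemma Axm_Axm1 A x : Axm A x = \sum_i x ord0 i * Axm1 A x ord0 i.
Proof.
pose k0 : 'I_m := Ordinal m_gt0.
rewrite /Axm (partition_big (fun s : {ffun 'I_m -> 'I_n} => s k0) predT) //=.
apply: eq_bigr => i _; rewrite mxE mulr_sumr.
apply: eq_big => [s|s /eqP si].
  apply/eqP/forallP => [si k|/(_ k0)/implyP H]; last exact/eqP/H.
  by apply/implyP => /eqP k0'; rewrite (_ : k = k0) ?si //; apply/val_inj.
by rewrite (bigD1 k0) //= si mulrCA.
Qed.

Lemma Br_eigenvector_Axm A B lam x :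
  Br_eigenvector A B lam x -> Axm A x = lam * Axm B x.
Proof.
move=> [_ e]; rewrite !Axm_Axm1 e mulr_sumr; apply: eq_bigr => i _.
by rewrite mxE mulrCA.
Qed.

Lemma Br_eigenvectorZ A B lam x t :
  t != 0 -> Br_eigenvector A B lam x -> Br_eigenvector A B lam (t *: x).
Proof.
move=> t0 [x0 e]; split; first by rewrite scaler_eq0 negb_or t0.
by rewrite !Axm1Z e !scalerA mulrC.
Qed.

Lemma Br_eigenvector_normalize A B lam x b : pos_def B -> 0 < b ->
  Br_eigenvector A B lam x -> exists y, Br_eigenvector A B lam y /\ Axm B y = b.
Proof.
move=> pB b0 ex; have Bx := pB _ (proj1 ex).
pose q := b / Axm B x; have q0 : 0 < q by rewrite divr_gt0.
pose t := q `^ (m%:R^-1); have t0 : 0 < t by apply: powR_gt0.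
have tm : t ^+ m = q.
  by rewrite -powR_mulrn ?ltW // -powRrM mulVf ?pnatr_eq0 -?lt0n // powRr1 // ltW.
exists (t *: x); split; first exact: Br_eigenvectorZ (lt0r_neq0 t0) ex.
by rewrite AxmZ tm /q mulfVK // gt_eqF.
Qed.

Lemma Axm_unit_sphere A y : y != 0 -> Axm A y = `|y| ^+ m * Axm A (`|y|^-1 *: y).
Proof.
by move=> y0; rewrite AxmZ mulrA -exprMn mulfV ?normr_eq0 // expr1n mul1r.
Qed.

Lemma Axm_ge_unit_sphere A a :
  (forall z, unit_sphere z -> a <= Axm A z) -> forall y, `|y| ^+ m * a <= Axm A y.
Proof.
move=> Aa y; have [->|y0] := eqVneq y 0.
  by rewrite normr0 expr0n (negbTE (lt0n_neq0 m_gt0)) mul0r Axm0.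
rewrite Axm_unit_sphere // ler_pM2l ?exprn_gt0 ?normr_gt0 //.
exact/Aa/unit_sphere_normalize.
Qed.

Lemma Rayleigh_bound_unit_sphere A B c : pos_def B ->
  (forall z, unit_sphere z -> c * Axm B z <= Axm A z) ->
  forall y, c * Axm B y <= Axm A y.
Proof.
move=> pB cAB y; have [->|y0] := eqVneq y 0; first by rewrite !Axm0 mulr0.
rewrite [Axm B y]Axm_unit_sphere // [Axm A y]Axm_unit_sphere // mulrCA.
by rewrite ler_pM2l ?exprn_gt0 ?normr_gt0 //; exact/cAB/unit_sphere_normalize.
Qed.

Lemma Br_eigenvector_at_min A B c u :
  weakly_symmetric A -> weakly_symmetric B -> u != 0 ->
  (forall y, c * Axm B y <= Axm A y) -> Axm A u = c * Axm B u ->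
  Br_eigenvector A B c u.
Proof.
move=> wA wB u0 cAB Au; split => //.
have Fmin x : (Axm A - c \*: Axm B) u <= (Axm A - c \*: Axm B) x.
  change (Axm A u - c * Axm B u <= Axm A x - c * Axm B x).
  by rewrite Au subrr subr_ge0.
apply/rowP => i.
have := is_derive_min_eq0 Fmin (is_deriveB (wA u i) (is_deriveZ c (wB u i))).
rewrite !mxE /GRing.scale /= mulrCA -mulrBr => /eqP.
by rewrite mulf_eq0 pnatr_eq0 (negbTE (lt0n_neq0 m_gt0)) subr_eq0 => /eqP.
Qed.

Lemma Br_eigenvalue_Rayleigh_min A B : (0 < n)%N ->
  weakly_symmetric A -> weakly_symmetric B -> pos_def B ->
  exists2 c, Br_eigenvalue A B c & forall y, c * Axm B y <= Axm A y.
Proof.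
move=> n0 wA wB pB.
pose phi x := Axm A x / Axm B x.
have phi_cont : {within unit_sphere, continuous phi}.
  apply: continuous_in_subspaceT => x /set_mem /unit_sphere_neq0 /pB Bx.
  apply: continuousM; first exact: Axm_continuous.
  by apply: continuousV; [rewrite gt_eqF|exact: Axm_continuous].
have [u /set_mem uS umin] :=
  EVT_min_rV (unit_sphere_neq0set R n0) (@compact_unit_sphere R n) phi_cont.
have Bu := pB _ (unit_sphere_neq0 uS).
have cAB : forall y, phi u * Axm B y <= Axm A y.
  apply: Rayleigh_bound_unit_sphere => // z zS.
  by rewrite -ler_pdivlMr ?pB ?unit_sphere_neq0 //; exact/umin/mem_set.
exists (phi u) => //; exists u.
apply: Br_eigenvector_at_min (unit_sphere_neq0 uS) cAB _ => //.
by rewrite /phi -mulrA mulVf ?mulr1 ?gt_eqF.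
Qed.

Lemma min_Br_eigenvalue_le_Rayleigh A B lmin : (0 < n)%N ->
  weakly_symmetric A -> weakly_symmetric B -> pos_def B ->
  (forall lam, Br_eigenvalue A B lam -> lmin <= lam) ->
  forall y, lmin * Axm B y <= Axm A y.
Proof.
move=> n0 wA wB pB lmin_le y.
have [c /lmin_le lmin_c cAB] := Br_eigenvalue_Rayleigh_min n0 wA wB pB.
by apply: le_trans (cAB y); rewrite ler_wpM2r ?Axm_ge0.
Qed.

Lemma has_gradient_f1 A B : weakly_symmetric A -> weakly_symmetric B ->
  forall x, has_gradient (f1 A B) x (Axm B x *: Axm1 B x + Axm1 A x).
Proof.
move=> wA wB x i.
have -> : f1 A B = ((2 * m)%:R^-1 \*: Axm B ^+ 2) + (m%:R^-1 \*: Axm A).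
  by apply/funext => y; rewrite /f1 /= (mulrC (Axm B y ^+ 2)) (mulrC (Axm A y)).
apply: is_derive_eq.
  by apply: is_deriveD; apply: is_deriveZ; [apply: is_deriveX; exact: wB|exact: wA].
have m0 : (m%:R : R) != 0 by rewrite pnatr_eq0 -lt0n.
by rewrite !mxE /GRing.scale /= natrM expr1; field; rewrite m0.
Qed.

Lemma critical_point_f1P A B x : weakly_symmetric A -> weakly_symmetric B ->
  critical_point (f1 A B) x <-> Axm B x *: Axm1 B x + Axm1 A x = 0.
Proof.
move=> wA wB; have grad := has_gradient_f1 wA wB x; split => [crit|grad0 i].
  apply/rowP => i.
  by case: (grad i) => _ <-; case: (crit i) => _ <-.
by rewrite -grad0.
Qed.

Lemma f1_lower_bound A B l : (forall y, l * Axm B y <= Axm A y) ->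
  forall y, Axm B y ^+ 2 / (2 * m)%:R + l * Axm B y / m%:R <= f1 A B y.
Proof. by move=> lAB y; rewrite lerD2l ler_pM2r ?invr_gt0 ?ltr0n. Qed.

Lemma f1_coercive A B : (0 < n)%N -> pos_def B -> coercive (f1 A B).
Proof.
move=> n0 pB M.
have sphere_min (T : tensor R m n) : exists2 z, unit_sphere z &
    forall y, `|y| ^+ m * Axm T z <= Axm T y.
  have [z /set_mem zS zmin] := EVT_min_rV (unit_sphere_neq0set R n0)
    (@compact_unit_sphere R n) (continuous_subspaceT (@Axm_continuous T)).
  by exists z => //; apply: Axm_ge_unit_sphere => y yS; exact/zmin/mem_set.
have [zb /unit_sphere_neq0 /pB b0 Bge] := sphere_min B.
have [za _ Age] := sphere_min A.
have c0 : 0 < Axm B zb ^+ 2 / (2 * m)%:R.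
  by rewrite divr_gt0 ?exprn_gt0 ?ltr0n ?muln_gt0.
have [K HK] := quadratic_unbounded (Axm A za / m%:R) M c0.
exists (Num.max K 1) => x; rewrite gt_max => /andP[Kx x1].
have xs : `|x| <= `|x| ^+ m by rewrite ler_eXnr // ltW.
apply: lt_le_trans (HK _ (lt_le_trans Kx xs)) _.
rewrite /f1 (_ : _ + _ = (`|x| ^+ m * Axm B zb) ^+ 2 / (2 * m)%:R +
                         `|x| ^+ m * Axm A za / m%:R); last by ring.
rewrite lerD // ler_pM2r ?invr_gt0 ?ltr0n ?muln_gt0 //.
by rewrite !expr2 ler_pM // mulr_ge0 // ?ltW // exprn_ge0.
Qed.

Lemma critical_point_f1_Br_eigenvector A B : (1 < m)%N ->
  weakly_symmetric A -> weakly_symmetric B -> pos_def B -> forall x,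
  critical_point (f1 A B) x <->
    x = 0 \/ exists lam, lam < 0 /\ Br_eigenvector A B lam x /\ Axm B x = - lam.
Proof.
move=> m1 wA wB pB x; rewrite critical_point_f1P //; split.
  have [-> _|x0 e] := eqVneq x 0; first by left.
  right; exists (- Axm B x); rewrite oppr_lt0 opprK pB //; split => //; split => //.
  by split => //; apply/eqP; rewrite scaleNr -addr_eq0 addrC e.
case=> [->|[lam [_ [[_ e] ->]]]]; first by rewrite !Axm1_0 // scaler0 addr0.
by rewrite e scaleNr addNr.
Qed.

Lemma f1_Br_eigenvector A B l x : Br_eigenvector A B l x -> Axm B x = - l ->
  f1 A B x = - (l ^+ 2 / (2 * m)%:R).
Proof.
move=> ex Bx; have m0 : (m%:R : R) != 0 by rewrite pnatr_eq0 -lt0n.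
by rewrite /f1 (Br_eigenvector_Axm ex) Bx natrM; field; rewrite m0.
Qed.

Lemma f1_ge_min_value A B l : (forall y, l * Axm B y <= Axm A y) ->
  forall y, - (l ^+ 2 / (2 * m)%:R) <= f1 A B y.
Proof.
move=> lAB y; apply: le_trans (f1_lower_bound lAB y).
have m0 : (m%:R : R) != 0 by rewrite pnatr_eq0 -lt0n.
rewrite -subr_ge0 (_ : _ - _ = (Axm B y + l) ^+ 2 / (2 * m)%:R).
  by rewrite divr_ge0 ?sqr_ge0.
by rewrite natrM; field; rewrite m0.
Qed.

Lemma f1_gt0 A B l : pos_def B -> 0 <= l -> (forall y, l * Axm B y <= Axm A y) ->
  forall y, y != 0 -> 0 < f1 A B y.
Proof.
move=> pB l0 lAB y /pB By; apply: lt_le_trans (f1_lower_bound lAB y).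
apply: ltr_pwDl; last by rewrite !mulr_ge0 ?invr_ge0 ?ler0n // ltW.
by rewrite divr_gt0 ?exprn_gt0 ?ltr0n ?muln_gt0.
Qed.

End TensorForms.

Theorem theorem5 (R : realType) (m n : nat) (A B : tensor R m n) (lmin : R) :
  (0 < n)%N -> (0 < m)%N -> ~~ odd m ->
  weakly_symmetric A -> weakly_symmetric B -> pos_def B ->
  Br_eigenvalue A B lmin -> (forall lam, Br_eigenvalue A B lam -> lmin <= lam) ->
  (* gradient formula *)
  (forall x, has_gradient (f1 A B) x (Axm B x *: Axm1 B x + Axm1 A x)) /\
  (* (a) *)
  coercive (f1 A B) /\
  (* (b) *)
  (forall x, critical_point (f1 A B) x <->
     (x = 0 \/ exists lam, lam < 0 /\ Br_eigenvector A B lam x /\ Axm B x = - lam)) /\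
  (* (c) *)
  (lmin < 0 ->
     (exists x, Br_eigenvector A B lmin x /\ Axm B x = - lmin) /\
     (forall x, Br_eigenvector A B lmin x -> Axm B x = - lmin ->
        f1 A B x = - (lmin ^+ 2 / (2 * m)%:R) /\ (forall y, f1 A B x <= f1 A B y))) /\
  (* (d) *)
  (0 <= lmin ->
     (forall x, critical_point (f1 A B) x <-> x = 0) /\
     (forall x, (forall y, f1 A B x <= f1 A B y) <-> x = 0)).
Proof.
move=> n0 m0 m_even wA wB pB [x0 ex0] lmin_le.
(* Evenness of [m] is only used to rule out [m = 1]. *)
have m1 : (1 < m)%N by case: m m0 m_even {A B wA wB pB ex0 lmin_le} => [|[]].
have lAB := min_Br_eigenvalue_le_Rayleigh m0 n0 wA wB pB lmin_le.
have crit := critical_point_f1_Br_eigenvector m0 m1 wA wB pB.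
have f10 : f1 A B 0 = 0 by rewrite /f1 !Axm0 // expr2 !mul0r add0r.
split; first exact: has_gradient_f1.
split; first exact: f1_coercive.
split; first exact: crit.
split => lmin0.
  split; first by apply: (Br_eigenvector_normalize m0 pB _ ex0); rewrite oppr_gt0.
  move=> x ex Bx; rewrite (f1_Br_eigenvector m0 ex Bx); split => // y.
  exact: f1_ge_min_value.
have f1_pos := f1_gt0 m0 pB lmin0 lAB.
split => x.
  rewrite crit; split => [[//|[lam [lam0 [ex _]]]]|->]; last by left.
  by have := lmin_le lam (ex_intro _ x ex); rewrite leNgt (lt_le_trans lam0 lmin0).
split => [xmin|-> y]; last by have [->|/f1_pos/ltW] := eqVneq y 0; rewrite f10.
by apply/eqP/negPn/negP => /f1_pos; rewrite ltNge (le_trans (xmin 0)) ?f10.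
Qed.
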